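(* Let $C=xe_0B_1e_1B_2\cdots B_ke_ky$ be a subcubic chain with chain-blocks $(\overline{B_i},\bar e_i)$, $i\in[k]$, and assume $\delta(\overline{B_i},\bar e_i)+\widehat\delta(\overline{B_i},\bar e_i)\le 0$ for all $i\in[k]$. Then $\delta(\overline C,e_C)+\widehat\delta(\overline C,e_C)\le 0$, with equality if and only if $\delta(\overline{B_i},\bar e_i)+\widehat\delta(\overline{B_i},\bar e_i)=0$ for all $i\in[k]$.
   Context: Graphs are finite and may have loops and parallel edges unless called simple; a loop contributes 2 to the degree of its vertex, and a graph is subcubic if every vertex has degree at most 3. $n(G)$ is the number of vertices of $G$ and $n_2(G)$ the number of vertices of degree 2. A cycle is a connected 2-regular subgraph (so a loop, or a pair of parallel edges, forms a cycle). An even cover of $G$ is a spanning subgraph $F$ in which every vertex has degree 0 or 2; its excess is $\mathrm{exc}(F)=2c(F)+i(F)$, where $c(F)$ is the number of cycles and $i(F)$ the number of isolated vertices of $F$. For $e\in E(G)$, let $\mathcal E(G,e)$ (resp. $\widehat{\mathcal E}(G,e)$) be the set of even covers of $G$ containing (resp. not containing) $e$, and define $\mathrm{exc}(G,e)=\min_{F\in\mathcal E(G,e)}\mathrm{exc}(F)-2$, $\widehat{\mathrm{exc}}(G,e)=\min_{F\in\widehat{\mathcal E}(G,e)}\mathrm{exc}(F)$, $\delta(G,e)=\mathrm{exc}(G,e)-\frac{n(G)+n_2(G)}4$, $\widehat\delta(G,e)=\widehat{\mathrm{exc}}(G,e)-\frac{n(G)+n_2(G)}4$. A subcubic chain is a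 simple connected subcubic graph $C$ written as an alternating sequence $C=x e_0 B_1 e_1 B_2\cdots B_k e_k y$ ($k\ge 0$) such that: $\{e_0,\dots,e_k\}$ is exactly the set of cut-edges of $C$; the connected components of $C-\{e_0,\dots,e_k\}$ are $B_0,B_1,\dots,B_{k+1}$ with $V(B_0)=\{x\}$, $V(B_{k+1})=\{y\}$; each $B_i$ ($1\le i\le k$) is a single vertex or 2-connected; and $e_i$ joins a vertex of $B_i$ to a vertex of $B_{i+1}$ ($0\le i\le k$). Its endpoints are $x,y$ and its end edges are $e_0,e_k$. It is trivial if $k=0$. If $k\ge1$, let $x_i$ (resp. $y_i$) be the endpoint of $e_{i-1}$ (resp. $e_i$) in $B_i$; the chain-blocks of $C$ are the pairs $(\overline{B_i},\bar e_i)$, $i\in[k]$, where $\overline{B_i}$ is $B_i$ plus a new edge $\bar e_i=x_iy_i$ (a loop if $B_i$ is a single vertex), and the closure of $C$ is $(\overline C,e_C)$ where $\overline C$ is obtained from $C-\{x,y\}$ by adding a new edge $e_C=x_1y_k$. If $C$ is trivial we set $\mathrm{exc}(\overline C,e_C)=\widehat{\mathrm{exc}}(\overline C,e_C)=\delta(\overline C,e_C)=\widehat\delta(\overline C,e_C)=0$. *)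

From mathcomp Require Import all_boot all_order all_algebra.
Set Implicit Arguments. Unset Strict Implicit. Unset Printing Implicit Defensive.
Import Order.TTheory GRing.Theory Num.Theory.

(* Finite multigraphs (loops and parallel edges allowed).                     *)
Record mgraph (V E : finType) := MGraph {
  mV : {set V};
  mE : {set E};
  mends : E -> V * V }.

Section Graphs.
Variables V E : finType.
Implicit Types (G : mgraph V E) (W : {set V}) (F : {set E}).

Definition wf_graph G : bool :=
  [forall f in mE G, ((mends G f).1 \in mV G) && ((mends G f).2 \in mV G)].

(* degree: a loop contributes 2 *)
Definition deg G (v : V) : nat :=
  #|[set f in mE G | (mends G f).1 == v]| + #|[set f in mE G | (mends G f).2 == v]|.

Definition n_ G : nat := #|mV G|.
Definition n2_ G : nat := #|[set v in mV G | deg G v == 2]|.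

Definition subcubic G : bool := [forall v in mV G, deg G v <= 3].

Definition simple_graph G : bool :=
  [forall f in mE G, (mends G f).1 != (mends G f).2] &&
  [forall f in mE G, forall g in mE G,
     ((mends G f == mends G g) ||
      (mends G f == ((mends G g).2, (mends G g).1))) ==> (f == g)].

Definition adj G : rel V := fun u v =>
  [exists f in mE G, (mends G f == (u, v)) || (mends G f == (v, u))].

Definition comps G : {set {set V}} :=
  [set [set w in mV G | connect (adj G) v w] | v in mV G].

Definition ncomp G : nat := #|comps G|.
Definition connected G : bool := ncomp G == 1.

Definition induced G W : mgraph V E :=
  MGraph W [set f in mE G | ((mends G f).1 \in W) && ((mends G f).2 \in W)] (mends G).
Definition del_edges G F : mgraph V E := MGraph (mV G) (mE G :\: F) (mends G).
Definition span_sub G F : mgraph V E := MGraph (mV G) F (mends G).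

Definition cut_edge G (f : E) : bool :=
  (f \in mE G) && (ncomp G < ncomp (del_edges G [set f])).

Definition two_connected G : bool :=
  (2 < #|mV G|) && connected G &&
  [forall v in mV G, connected (induced G (mV G :\ v))].

Definition even_cover G F : bool :=
  (F \subset mE G) &&
  [forall v in mV G, (deg (span_sub G F) v == 0) || (deg (span_sub G F) v == 2)].

Definition ncycles G F : nat :=
  #|[set K in comps (span_sub G F) | [exists v in K, deg (span_sub G F) v != 0]]|.
Definition nisolated G F : nat :=
  #|[set v in mV G | deg (span_sub G F) v == 0]|.
Definition excF G F : nat := 2 * ncycles G F + nisolated G F.

(* minimum of excF over the even covers satisfying P
   (0 if there is none; never used in that case) *)
Definition excmin G (P : pred {set E}) : nat :=
  match [pick F | even_cover G F && P F] with
  | None => 0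
  | Some F0 => \big[minn/excF G F0]_(F | even_cover G F && P F) excF G F
  end.

Definition exc_e G (e : E) : int := ((excmin G (fun F => e \in F))%:Z - 2)%R.
Definition exchat_e G (e : E) : int := (excmin G (fun F => e \notin F))%:Z.

Definition delta G (e : E) : rat :=
  ((exc_e G e)%:~R - (n_ G + n2_ G)%:R / 4%:R)%R.
Definition deltahat G (e : E) : rat :=
  ((exchat_e G e)%:~R - (n_ G + n2_ G)%:R / 4%:R)%R.

End Graphs.

(* es i = e_i (0 <= i <= k), Bs i = V(B_i) (0 <= i <= k+1).                   *)
Section Chains.
Variables V E : finType.
Implicit Types (C : mgraph V E).

Definition joins C (f : E) (A B : {set V}) : bool :=
  (((mends C f).1 \in A) && ((mends C f).2 \in B)) ||
  (((mends C f).2 \in A) && ((mends C f).1 \in B)).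

Definition endin C (A : {set V}) (f : E) : V :=
  if (mends C f).1 \in A then (mends C f).1 else (mends C f).2.

Definition chain_edges (k : nat) (es : nat -> E) : {set E} :=
  [set es (nat_of_ord i) | i : 'I_k.+1].

Definition subcubic_chain C (k : nat) (x y : V) (es : nat -> E)
    (Bs : nat -> {set V}) : Prop :=
  [/\ wf_graph C, simple_graph C, connected C & subcubic C] /\
  [/\ [set f | cut_edge C f] = chain_edges k es,
      comps (del_edges C (chain_edges k es)) = [set Bs (nat_of_ord i) | i : 'I_k.+2]
      /\ (forall i j, i <= k.+1 -> j <= k.+1 -> Bs i = Bs j -> i = j),
      Bs 0 = [set x] /\ Bs k.+1 = [set y],
      (forall i, 1 <= i <= k ->
         (#|Bs i| == 1) || two_connected (induced (del_edges C (chain_edges k es)) (Bs i)))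
    & (forall i, i <= k -> joins C (es i) (Bs i) (Bs i.+1))].

Definition chain_B C (k : nat) (es : nat -> E) (Bs : nat -> {set V}) (i : nat) : mgraph V E :=
  induced (del_edges C (chain_edges k es)) (Bs i).

(* chain-block (bar B_i, bar e_i): edge type option E, bar e_i = None,
   joining x_i = end of e_{i-1} in B_i and y_i = end of e_i in B_i *)
Definition chain_block C k (es : nat -> E) (Bs : nat -> {set V}) (i : nat)
    : mgraph V (option E) :=
  let B := chain_B C k es Bs i in
  MGraph (mV B) (None |: [set Some f | f in mE B])
    (fun o => match o with
              | Some f => mends C f
              | None => (endin C (Bs i) (es i.-1), endin C (Bs i) (es i))
              end).

(* closure (bar C, e_C): C - {x,y} plus the new edge e_C = None = x_1 y_k *)
Definition chain_closure C k x y (es : nat -> E) (Bs : nat -> {set V})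
    : mgraph V (option E) :=
  let D := induced C (mV C :\ x :\ y) in
  MGraph (mV D) (None |: [set Some f | f in mE D])
    (fun o => match o with
              | Some f => mends C f
              | None => (endin C (Bs 1) (es 0), endin C (Bs k) (es k))
              end).

(* delta + deltahat of a chain-block, and of the closure (0 if C trivial) *)
Definition block_dsum C (k : nat) (es : nat -> E) (Bs : nat -> {set V}) (i : nat) : rat :=
  (delta (chain_block C k es Bs i) None + deltahat (chain_block C k es Bs i) None)%R.

Definition closure_dsum C (k : nat) (x y : V) (es : nat -> E) (Bs : nat -> {set V}) : rat :=
  (if k == 0 then 0
  else delta (chain_closure C k x y es Bs) None
       + deltahat (chain_closure C k x y es Bs) None)%R.

End Chains.

From mathcomp Require Import all_boot all_order all_algebra.
Import Order.TTheory GRing.Theory Num.Theory.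
From mathcomp Require Import zify lra.
Set Implicit Arguments. Unset Strict Implicit. Unset Printing Implicit Defensive.

(* For a nontrivial chain (k >= 1) we prove the exact identity
     closure_dsum = \sum_(1 <= i <= k) block_dsum i              (closure_sum)
   from which the proposition follows at once: a sum of nonpositive rationals
   is nonpositive, and it vanishes iff every term does.

   The identity comes from a correspondence between even covers.  An even
   cover F of the closure (bar C, e_C) contains all or none of the edges
   e_C, e_1, ..., e_(k-1) (parity across the cut {e_j}); its restrictions F_i
   to the chain-blocks are even covers with bar e_i in F_i iff e_C in F, and
   conversely every such family glues back to an even cover of the closure.
   Counting isolated vertices block by block, and components of F (a cycle
   through e_C runs through all k blocks), gives
     exc F + 2k [e_C in F] = \sum_i exc F_i + 2 [e_C in F],
   so the minimal excesses with and without e_C add up in the same way, while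
   n + n_2 is additive because degrees are unchanged.  Subcubicity is used
   only to show that each chain-block has an even cover through bar e_i. *)

Lemma card_sumE (U : finType) (A : {set U}) : #|A| = \sum_u (u \in A).
Proof. by rewrite -sum1_card big_mkcond; apply: eq_bigr => u _; case: (u \in A). Qed.

Lemma card_sepE (U : finType) (A : {set U}) (P : pred U) :
  #|[set u in A | P u]| = \sum_u (u \in A) * P u.
Proof.
rewrite card_sumE; apply: eq_bigr => u _.
by rewrite inE; case: (u \in A); case: (P u).
Qed.

Lemma sum_option (T : finType) (F : option T -> nat) :
  \sum_(o : option T) F o = F None + \sum_(t : T) F (Some t).
Proof.
rewrite (bigD1 None) //=; congr (_ + _).
case: (pickP T) => [t0 _|T0].
  rewrite [LHS](reindex_onto Some (fun o => odflt t0 o)) /=; last by case.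
  by apply: eq_bigl => t; rewrite eqxx.
by rewrite !big_pred0 // => [[t|]] //=; have := T0 t.
Qed.

Lemma sum_unique_index (U : finType) (k : nat) (P : nat -> pred U) (u : U) :
  (forall i j, i < k -> j < k -> P i.+1 u -> P j.+1 u -> i = j) ->
  \sum_(i < k) P i.+1 u = [exists i : 'I_k, P i.+1 u].
Proof.
move=> uniqP; case: existsP => [[i Pi]|noP].
  rewrite (bigD1 i) //= Pi big1 // => j ji; case Pj: (P j.+1 u) => //.
  have Eji : j = i by apply: val_inj; exact: uniqP (ltn_ord j) (ltn_ord i) Pj Pi.
  by rewrite Eji eqxx in ji.
by rewrite big1 // => j _; case Pj: (P j.+1 u) => //; case: noP; exists j.
Qed.

Lemma ord_succ (k i : nat) : 1 <= i <= k -> exists j : 'I_k, i = j.+1.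
Proof.
move=> ik; have jk : i.-1 < k by lia.
by exists (Ordinal jk) => /=; lia.
Qed.

Lemma ord_succ_range (k : nat) (i : 'I_k) : 1 <= i.+1 <= k.
Proof. by have := ltn_ord i; lia. Qed.

Lemma connect_invariant (T : finType) (e : rel T) (S : T -> Prop) a b :
  (forall u v, S u -> e u v -> S v) -> S a -> connect e a b -> S b.
Proof.
move=> stepS Sa /connectP [p]; elim: p a Sa => [|c p IH] a Sa /=.
  by move=> _ ->.
by case/andP => eac pc lb; exact: IH c (stepS _ _ Sa eac) pc lb.
Qed.

Lemma connect_simulate (T : finType) (e1 e2 : rel T) (S : T -> Prop) a b :
  (forall u v, S u -> e1 u v -> S v /\ connect e2 u v) -> S a ->
  connect e1 a b -> connect e2 a b.
Proof.
move=> stepS Sa /connectP [p]; elim: p a Sa => [|c p IH] a Sa /=.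
  by move=> _ ->.
case/andP => eac pc lb; have [Sc ac] := stepS _ _ Sa eac.
exact: connect_trans ac (IH c Sc pc lb).
Qed.

Lemma connect_sub (T : finType) (e1 e2 : rel T) a b :
  subrel e1 e2 -> connect e1 a b -> connect e2 a b.
Proof.
move=> sub12; apply: (connect_simulate (S := fun=> True)) => // u v _ uv.
by split => //; apply/connect1/sub12.
Qed.

Lemma sum_eq1 (U : finType) (b : U) (S : {set U}) : \sum_(u in S) (b == u) = (b \in S).
Proof.
case: (boolP (b \in S)) => bS.
  rewrite (bigD1 b) //= eqxx big1 // => u /andP [_ /negPf].
  by rewrite eq_sym => ->.
by rewrite big1 // => u uS; case: eqP => // Eb; rewrite Eb uS in bS.
Qed.

Lemma odd_sum (I : Type) (r : seq I) (P : pred I) (g : I -> nat) :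
  odd (\sum_(i <- r | P i) g i) = \big[addb/false]_(i <- r | P i) odd (g i).
Proof. by apply: (big_morph odd oddD). Qed.

Lemma in_opt_Some (T : finType) (A : {set T}) t :
  (Some t \in None |: [set Some u | u in A]) = (t \in A).
Proof. by rewrite !inE /=; apply/imsetP/idP => [[u Au [->]]|At] //; exists t. Qed.

Lemma in_opt_None (T : finType) (A : {set T}) : None \in None |: [set Some u | u in A].
Proof. by rewrite !inE eqxx. Qed.

Section Multigraphs.
Variables V T : finType.
Implicit Types (G : mgraph V T) (F : {set T}).

Definition incid G (o : T) (v : V) : nat :=
  ((mends G o).1 == v) + ((mends G o).2 == v).

Lemma deg_spanE G F v : deg (span_sub G F) v = \sum_o (o \in F) * incid G o v.
Proof.
rewrite /deg /= !card_sepE -big_split /=; apply: eq_bigr => o _.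
by rewrite /incid; case: (o \in F); rewrite ?mul1n ?mul0n.
Qed.

Lemma deg_spanE_in G F v : deg (span_sub G F) v = \sum_(o in F) incid G o v.
Proof.
rewrite deg_spanE [RHS]big_mkcond; apply: eq_bigr => o _.
by case: (o \in F); rewrite ?mul1n ?mul0n.
Qed.

Lemma degE G v : deg G v = \sum_o (o \in mE G) * incid G o v.
Proof. exact: deg_spanE. Qed.

Lemma deg_span_mono G F1 F2 v :
  F1 \subset F2 -> deg (span_sub G F1) v <= deg (span_sub G F2) v.
Proof.
move=> sF12; rewrite !deg_spanE; apply: leq_sum => o _.
by case F1o: (o \in F1); rewrite ?(subsetP sF12 _ F1o) // mul0n.
Qed.

Lemma odd_deg_toggle G F o v :
  odd (deg (span_sub G (if o \in F then F :\ o else o |: F)) v) =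
  odd (deg (span_sub G F) v) (+) odd (incid G o v).
Proof.
case: ifP => Fo.
  rewrite [in RHS]deg_spanE_in (big_setD1 _ Fo) -deg_spanE_in (oddD (incid G o v)).
  by case: (odd (incid G o v)); case: (odd (deg (span_sub G (F :\ o)) v)).
by rewrite deg_spanE_in big_setU1 ?Fo // -deg_spanE_in (oddD (incid G o v)) addbC.
Qed.

Lemma adj_sym G : symmetric (adj G).
Proof.
by move=> u v; apply/existsP/existsP => -[f /andP [Gf uv]]; exists f;
  rewrite Gf orbC.
Qed.

Lemma adjP G u v : reflect (exists2 f, f \in mE G &
   (mends G f = (u, v) \/ mends G f = (v, u))) (adj G u v).
Proof.
apply: (iffP existsP) => [[f /andP [Gf /orP [/eqP uv|/eqP vu]]]|[f Gf [uv|vu]]];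
  exists f => //; [by left|by right| | ]; by rewrite Gf ?uv ?vu eqxx ?orbT.
Qed.

Lemma adj_vertex G u v : wf_graph G -> adj G u v -> v \in mV G.
Proof.
move=> /forallP wfG /adjP [f Gf ends]; have := wfG f.
by rewrite Gf /=; case: ends => ->; case/andP.
Qed.

Lemma wf_span G F : wf_graph G -> F \subset mE G -> wf_graph (span_sub G F).
Proof.
move=> /forallP wfG sFG; apply/forallP => f; apply/implyP => Ff.
by have := wfG f; rewrite (subsetP sFG _ Ff).
Qed.

Definition comp G v := [set w in mV G | connect (adj G) v w].

Lemma compE G v w : (w \in comp G v) = (w \in mV G) && connect (adj G) v w.
Proof. by rewrite inE. Qed.

Lemma comp_eq G u w : w \in comp G u -> comp G w = comp G u.
Proof.
rewrite inE => /andP [_ uw]; apply/setP => z; rewrite !inE.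
by rewrite (same_connect (sym_connect_sym (@adj_sym G)) uw).
Qed.

Lemma comp_self G v : v \in mV G -> v \in comp G v.
Proof. by move=> Gv; rewrite inE Gv connect0. Qed.

Lemma comp_sub G v : comp G v \subset mV G.
Proof. by apply/subsetP => w; rewrite inE => /andP []. Qed.

Lemma ncyclesE G F : ncycles G F =
  #|comp (span_sub G F) @: [set v in mV G | deg (span_sub G F) v != 0]|.
Proof.
rewrite /ncycles; apply: eq_card => K; rewrite inE.
apply/andP/imsetP => [[/imsetP [u Gu ->] /existsP [v /andP [Kv dv]]]|[v]].
  exists v; last by rewrite (comp_eq Kv).
  by rewrite inE dv andbT; apply: (subsetP (comp_sub (span_sub G F) u)).
rewrite inE => /andP [Gv dv] ->; split; first by apply/imsetP; exists v.
by apply/existsP; exists v; rewrite dv andbT comp_self.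
Qed.

Lemma even_coverP G F : even_cover G F -> F \subset mE G /\
  (forall v, v \in mV G -> (deg (span_sub G F) v == 0) || (deg (span_sub G F) v == 2)).
Proof. by case/andP => sFG /forallP dF; split => // v Gv; have := dF v; rewrite Gv. Qed.

Lemma even_coverI G F : F \subset mE G ->
  (forall v, v \in mV G -> (deg (span_sub G F) v == 0) || (deg (span_sub G F) v == 2)) ->
  even_cover G F.
Proof.
move=> sFG dF; rewrite /even_cover sFG; apply/forallP => v.
by apply/implyP; apply: dF.
Qed.

Lemma even_cover_deg G F v : even_cover G F -> v \in mV G -> ~~ odd (deg (span_sub G F) v).
Proof. by case/even_coverP => _ dF /dF /orP [] /eqP ->. Qed.

(* Handshake lemma across a cut: if every vertex of S has even degree in F,
   an even number of edges of F have exactly one end in S. *)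
Lemma cut_parity G F (S : {set V}) :
  (forall v, v \in S -> ~~ odd (deg (span_sub G F) v)) ->
  ~~ odd #|[set o in F | ((mends G o).1 \in S) (+) ((mends G o).2 \in S)]|.
Proof.
move=> evenS.
have sum_deg : \sum_(v in S) deg (span_sub G F) v =
   \sum_o (o \in F) * (((mends G o).1 \in S) + ((mends G o).2 \in S)).
  under eq_bigr => v _ do rewrite deg_spanE.
  rewrite exchange_big /=; apply: eq_bigr => o _.
  by rewrite -big_distrr /= /incid big_split /= !sum_eq1.
have : ~~ odd (\sum_(v in S) deg (span_sub G F) v).
  rewrite odd_sum; apply: (big_ind (fun b : bool => ~~ b)) => //.
  by move=> a b; case: a; case: b.
rewrite sum_deg card_sepE !odd_sum; congr (~~ _); apply: eq_bigr => o _.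
by case: (o \in F); case: (_ \in S); case: (_ \in S).
Qed.

Lemma excmin_le G (P : pred {set T}) F :
  even_cover G F -> P F -> excmin G P <= excF G F.
Proof.
move=> evF PF; rewrite /excmin; case: pickP => [F1 _|none]; last first.
  by have := none F; rewrite evF PF.
rewrite -minEnat.
have := @Order.TotalTheory.bigmin_le_cond _ nat _ (excF G F1) F
  (fun F => even_cover G F && P F) (excF G).
by rewrite evF PF => /(_ isT).
Qed.

Lemma excmin_ex G (P : pred {set T}) F0 :
  even_cover G F0 -> P F0 ->
  exists2 F, even_cover G F && P F & excmin G P = excF G F.
Proof.
move=> evF0 PF0; rewrite /excmin; case: pickP => [F1 HF1|none]; last first.
  by have := none F0; rewrite evF0 PF0.
apply: (big_ind (fun m => exists2 F, even_cover G F && P F & m = excF G F)).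
- by exists F1.
- move=> a b [Fa Ha ->] [Fb Hb ->]; rewrite /minn.
  by case: ifP => _; [exists Fa | exists Fb].
- by move=> F HF; exists F.
Qed.

Lemma eq_excmin G (P Q : pred {set T}) : P =1 Q -> excmin G P = excmin G Q.
Proof.
move=> EPQ; rewrite /excmin.
have EPQ' : (fun F => even_cover G F && P F) =1 (fun F => even_cover G F && Q F).
  by move=> F; rewrite EPQ.
rewrite (eq_pick EPQ'); case: pickP => // F0 _.
by apply: eq_bigl => F; rewrite EPQ.
Qed.

End Multigraphs.

Definition has_new_edge (T : finType) (b : bool) (F : {set option T}) := (None \in F) == b.

Section DeltaSum.
Local Open Scope ring_scope.

Lemma dsumE (V T : finType) (G : mgraph V (option T)) :
  delta G None + deltahat G None =
  (excmin G (has_new_edge true))%:R - 2 + (excmin G (has_new_edge false))%:R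
  - 2 * ((n_ G + n2_ G)%:R / 4%:R).
Proof.
rewrite /delta /deltahat /exc_e /exchat_e intrB.
rewrite (@eq_excmin _ _ G (fun F => None \in F) (has_new_edge true)); last first.
  by move=> F; rewrite /has_new_edge eqb_id.
rewrite (@eq_excmin _ _ G (fun F => None \notin F) (has_new_edge false)); last first.
  by move=> F; rewrite /has_new_edge eqbF_neg.
by rewrite !pmulrn; lra.
Qed.

Lemma sum_nonpos (R : numDomainType) (k : nat) (F : nat -> R) :
  (forall i, (1 <= i <= k)%N -> F i <= 0) ->
  \sum_(i < k) F i.+1 <= 0 /\
  (\sum_(i < k) F i.+1 = 0 <-> forall i, (1 <= i <= k)%N -> F i = 0).
Proof.
move=> F_le0; have F'_le0 (i : 'I_k) : F i.+1 <= 0 by apply/F_le0/ord_succ_range.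
split; first by apply: sumr_le0 => i _.
split => [sum0 i ik|F0]; last by apply: big1 => i _; apply/F0/ord_succ_range.
have [j ->] := ord_succ ik; apply/eqP; rewrite -oppr_eq0; apply/eqP.
apply: (@psumr_eq0P _ _ predT (fun j : 'I_k => - F j.+1)) => //.
  by move=> l _; rewrite oppr_ge0.
by rewrite sumrN sum0 oppr0.
Qed.

End DeltaSum.

Section Chain.
Variables (V E : finType) (C : mgraph V E) (k : nat) (x y : V)
  (es : nat -> E) (Bs : nat -> {set V}).
Hypothesis chainC : subcubic_chain C k x y es Bs.
Hypothesis k_gt0 : 0 < k.

(* The cut edges e_0..e_k, the graph C - {e_0..e_k} whose components are the
   B_i, the edges of B_i, the chain-blocks bar B_i and the closure bar C,
   whose new edges are [None]; [entry i] = x_i and [exit i] = y_i. *)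
Definition cuts := chain_edges k es.
Definition Cblocks := del_edges C cuts.
Definition block_edges i := mE (chain_B C k es Bs i).
Definition Bbar i := chain_block C k es Bs i.
Definition Cbar := chain_closure C k x y es Bs.
Definition entry i := endin C (Bs i) (es i.-1).
Definition exit i := endin C (Bs i) (es i).

Lemma C_wf : wf_graph C. Proof. by case: chainC => [[]]. Qed.
Lemma C_subcubic : subcubic C. Proof. by case: chainC => [[]]. Qed.
Lemma cut_edgesE : [set f | cut_edge C f] = cuts.
Proof. by case: chainC => _ []. Qed.
Lemma blocks_compsE : comps Cblocks = [set Bs (nat_of_ord i) | i : 'I_k.+2].
Proof. by case: chainC => _ [_ []]. Qed.
Lemma Bs_inj i j : i <= k.+1 -> j <= k.+1 -> Bs i = Bs j -> i = j.
Proof. by case: chainC => _ [_ [_ Binj] _ _ _]; apply: Binj. Qed.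
Lemma Bs_first : Bs 0 = [set x]. Proof. by case: chainC => _ [_ _ []]. Qed.
Lemma Bs_last : Bs k.+1 = [set y]. Proof. by case: chainC => _ [_ _ [_ ->]]. Qed.
Lemma es_joins i : i <= k -> joins C (es i) (Bs i) (Bs i.+1).
Proof. by case: chainC => _ [_ _ _ _ J]; apply: J. Qed.

Lemma C_ends f : f \in mE C -> (mends C f).1 \in mV C /\ (mends C f).2 \in mV C.
Proof. by move=> Cf; have /forallP /(_ f) := C_wf; rewrite Cf /= => /andP []. Qed.

Lemma Cblocks_wf : wf_graph Cblocks.
Proof.
apply/forallP => f; apply/implyP; rewrite /Cblocks /= inE => /andP [_ Cf].
by have [? ?] := C_ends Cf; apply/andP.
Qed.

Lemma Bs_compE j : j <= k.+1 -> exists2 a, a \in mV C & Bs j = comp Cblocks a.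
Proof.
move=> jk; have : Bs j \in comps Cblocks.
  by rewrite blocks_compsE; apply/imsetP; exists (Ordinal (n:=k.+2) (m:=j) jk).
by case/imsetP => a Ca ->; exists a.
Qed.

Lemma Bs_sub j : j <= k.+1 -> Bs j \subset mV C.
Proof. by case/Bs_compE => a _ ->; exact: comp_sub. Qed.

Lemma Bs_comp j w : j <= k.+1 -> w \in Bs j -> Bs j = comp Cblocks w.
Proof. by case/Bs_compE => a _ -> aw; rewrite (comp_eq aw). Qed.

Lemma Bs_disj i j v : i <= k.+1 -> j <= k.+1 -> v \in Bs i -> v \in Bs j -> i = j.
Proof. by move=> ik jk vi vj; apply: Bs_inj; rewrite // (Bs_comp ik vi) (Bs_comp jk vj). Qed.

Lemma Bs_neq i j a b : i <= k.+1 -> j <= k.+1 -> i != j -> a \in Bs i -> b \in Bs j ->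
  (a == b) = false.
Proof.
move=> ik jk ij ai bj; apply/negP => /eqP Eab; subst b.
by rewrite (Bs_disj ik jk ai bj) eqxx in ij.
Qed.

Lemma Bs_notin i j a : i <= k.+1 -> j <= k.+1 -> i != j -> a \in Bs i -> (a \in Bs j) = false.
Proof.
move=> ik jk ij ai; apply/negP => aj.
by rewrite (Bs_disj ik jk ai aj) eqxx in ij.
Qed.

Lemma Bs_cover v : v \in mV C -> exists2 j, j <= k.+1 & v \in Bs j.
Proof.
move=> Cv; have : comp Cblocks v \in comps Cblocks by apply/imsetP; exists v.
rewrite blocks_compsE => /imsetP [j _ Ej]; exists j; first by have := ltn_ord j.
by rewrite -Ej; apply: comp_self.
Qed.

Lemma Bs_closed j a b : j <= k.+1 -> a \in Bs j -> connect (adj Cblocks) a b -> b \in Bs j.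
Proof.
move=> jk aj ab; rewrite (Bs_comp jk aj) inE ab andbT.
apply: (connect_invariant (S := fun w => w \in mV C)) ab; last exact: subsetP (Bs_sub jk) _ aj.
by move=> u w _ /(adj_vertex Cblocks_wf).
Qed.

Lemma x_first : x \in Bs 0. Proof. by rewrite Bs_first set11. Qed.
Lemma y_last : y \in Bs k.+1. Proof. by rewrite Bs_last set11. Qed.

Lemma es_cut j : j <= k -> es j \in cuts.
Proof. by move=> jk; apply/imsetP; exists (Ordinal (n:=k.+1) (m:=j) jk). Qed.

Lemma es_edge j : j <= k -> es j \in mE C.
Proof. by move/es_cut; rewrite -cut_edgesE inE => /andP []. Qed.

Lemma cutsP f : f \in cuts -> exists2 j, j <= k & f = es j.
Proof. by case/imsetP => j _ ->; exists j => //; have := ltn_ord j. Qed.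

Lemma es_ends j : j <= k ->
  ((mends C (es j)).1 \in Bs j /\ (mends C (es j)).2 \in Bs j.+1) \/
  ((mends C (es j)).2 \in Bs j /\ (mends C (es j)).1 \in Bs j.+1).
Proof. by move/es_joins; case/orP => /andP []; [left|right]. Qed.

Lemma endin_left j : j <= k -> endin C (Bs j) (es j) \in Bs j.
Proof. by move=> jk; rewrite /endin; case: ifP => //; case: (es_ends jk) => -[-> _]. Qed.

Lemma endin_right j : j <= k -> endin C (Bs j.+1) (es j) \in Bs j.+1.
Proof.
move=> jk; rewrite /endin; case: ifP => //.
by case: (es_ends jk) => -[_ ->].
Qed.

Lemma incid_es_left j v : j <= k -> v \in Bs j ->
  incid C (es j) v = (endin C (Bs j) (es j) == v).
Proof.
move=> jk vj; rewrite /incid /endin.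
have j0 : j <= k.+1 by lia. have j1 : j.+1 <= k.+1 by lia.
have jj : j.+1 != j by lia.
case: (es_ends jk) => -[e1 e2].
  by rewrite e1 (Bs_neq j1 j0 jj e2 vj) addn0.
by rewrite (Bs_notin j1 j0 jj e2) (Bs_neq j1 j0 jj e2 vj).
Qed.

Lemma incid_es_right j v : j <= k -> v \in Bs j.+1 ->
  incid C (es j) v = (endin C (Bs j.+1) (es j) == v).
Proof.
move=> jk vj; rewrite /incid /endin.
have j0 : j <= k.+1 by lia. have j1 : j.+1 <= k.+1 by lia.
have jj : j != j.+1 by lia.
case: (es_ends jk) => -[e1 e2].
  by rewrite (Bs_notin j0 j1 jj e1) (Bs_neq j0 j1 jj e1 vj).
by rewrite e2 (Bs_neq j0 j1 jj e1 vj) addn0.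
Qed.

Lemma incid_es_far j i v : j <= k -> i <= k.+1 -> i != j -> i != j.+1 -> v \in Bs i ->
  incid C (es j) v = 0.
Proof.
move=> jk ik ij ij1 vi; rewrite /incid.
have j0 : j <= k.+1 by lia. have j1 : j.+1 <= k.+1 by lia.
rewrite eq_sym in ij; rewrite eq_sym in ij1.
by case: (es_ends jk) => -[e1 e2];
  rewrite (Bs_neq j0 ik ij e1 vi) (Bs_neq j1 ik ij1 e2 vi).
Qed.

Lemma es_inj i j : i <= k -> j <= k -> es i = es j -> i = j.
Proof.
have near a b : a <= k -> b <= k -> es a = es b -> a = b \/ a = b.+1.
  move=> ak bk Eab; have := incid_es_left ak (endin_left ak); rewrite eqxx {1}Eab.
  case: (altP (a =P b)) => [->|ab]; first by left.
  case: (altP (a =P b.+1)) => [->|ab1]; first by right.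
  by rewrite (incid_es_far bk _ ab ab1 (endin_left ak)) //; lia.
by move=> ik jk Eij; have := near _ _ ik jk Eij; have := near _ _ jk ik (esym Eij); lia.
Qed.

Lemma noncut_edge_block f : f \in mE C -> f \notin cuts ->
  exists2 j, j <= k.+1 & ((mends C f).1 \in Bs j) && ((mends C f).2 \in Bs j).
Proof.
move=> Cf ncf; have [e1 _] := C_ends Cf.
have [j jk ej] := Bs_cover e1; exists j => //; rewrite ej /=.
apply: (Bs_closed jk ej); apply: connect1; apply/adjP; exists f.
  by rewrite /Cblocks /= inE ncf.
by left; apply: surjective_pairing.
Qed.

Lemma block_edgesE i f : (f \in block_edges i) =
  [&& f \in mE C, f \notin cuts, (mends C f).1 \in Bs i & (mends C f).2 \in Bs i].
Proof. by rewrite /block_edges /chain_B /= !inE; case: (f \in cuts); case: (f \in mE C). Qed.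

Lemma es_notin_block i j : j <= k -> (es j \in block_edges i) = false.
Proof. by move=> jk; rewrite block_edgesE (es_cut jk) andbF. Qed.

Lemma block_edges_disj i j f : 1 <= i <= k -> 1 <= j <= k ->
  f \in block_edges i -> f \in block_edges j -> i = j.
Proof.
move=> ik jk; rewrite !block_edgesE => /and4P [_ _ fi _] /and4P [_ _ fj _].
by apply: (Bs_disj (v := (mends C f).1)) => //; lia.
Qed.

Lemma Cbar_vertexE v : (v \in mV Cbar) = [&& v != y, v != x & v \in mV C].
Proof. by rewrite /Cbar /chain_closure /= !inE. Qed.

Lemma Bs_Cbar i v : 1 <= i <= k -> v \in Bs i -> v \in mV Cbar.
Proof.
move=> ik vi; have ik1 : i <= k.+1 by lia.
rewrite Cbar_vertexE (subsetP (Bs_sub ik1) _ vi) andbT.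
by rewrite (Bs_neq ik1 (leqnn _) _ vi y_last) ?(Bs_neq ik1 (leq0n _) _ vi x_first) //; lia.
Qed.

Lemma Cbar_vertex_block v : v \in mV Cbar -> exists2 i, 1 <= i <= k & v \in Bs i.
Proof.
rewrite Cbar_vertexE => /and3P [vy vx Cv]; have [j jk vj] := Bs_cover Cv.
exists j => //; apply/andP; split.
  by case: j jk vj => // _; rewrite Bs_first inE => vx'; rewrite vx' in vx.
move: jk; rewrite leq_eqVlt => /orP [/eqP Ej|] //.
by move: vj; rewrite Ej Bs_last inE => vy'; rewrite vy' in vy.
Qed.

Lemma Cbar_SomeE f : (Some f \in mE Cbar) =
  [&& f \in mE C, (mends C f).1 \in mV Cbar & (mends C f).2 \in mV Cbar].
Proof. by rewrite /Cbar /chain_closure /= in_opt_Some !inE. Qed.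

Lemma Cbar_None : None \in mE Cbar.
Proof. exact: in_opt_None. Qed.

Lemma Bbar_SomeE i f : (Some f \in mE (Bbar i)) = (f \in block_edges i).
Proof. by rewrite /Bbar /chain_block /= in_opt_Some. Qed.

Lemma Bbar_None i : None \in mE (Bbar i).
Proof. exact: in_opt_None. Qed.

Lemma block_edge_Cbar i f : 1 <= i <= k -> f \in block_edges i -> Some f \in mE Cbar.
Proof.
move=> ik; rewrite block_edgesE Cbar_SomeE => /and4P [Cf _ e1 e2].
by rewrite Cf (Bs_Cbar ik e1) (Bs_Cbar ik e2).
Qed.

Lemma es_Cbar j : 0 < j < k -> Some (es j) \in mE Cbar.
Proof.
move=> jk; have jk' : j <= k by lia.
have j1 : 1 <= j <= k by lia. have j2 : 1 <= j.+1 <= k by lia.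
by rewrite Cbar_SomeE (es_edge jk') /=; case: (es_ends jk') => -[e1 e2];
  rewrite (Bs_Cbar j1 e1) (Bs_Cbar j2 e2).
Qed.

Lemma es_first_Cbar : Some (es 0) \notin mE Cbar.
Proof.
rewrite Cbar_SomeE !Cbar_vertexE; case: (es_ends (leq0n k)) => -[e1 _];
  by move: e1; rewrite Bs_first inE => /eqP ->; rewrite eqxx !andbF.
Qed.

Lemma es_last_Cbar : Some (es k) \notin mE Cbar.
Proof.
rewrite Cbar_SomeE !Cbar_vertexE; case: (es_ends (leqnn k)) => -[_ e2];
  by move: e2; rewrite Bs_last inE => /eqP ->; rewrite eqxx !andbF.
Qed.

Lemma Cbar_edge_class f : Some f \in mE Cbar ->
  (exists2 i, 1 <= i <= k & f \in block_edges i) \/ (exists2 j, 0 < j < k & f = es j).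
Proof.
move=> Gf; have := Gf; rewrite Cbar_SomeE => /and3P [Cf e1 e2].
case: (boolP (f \in cuts)) => cf.
  have [j jk Ef] := cutsP cf; right; exists j => //; apply/andP; split.
    by case: j jk Ef => // _ Ef; move: Gf; rewrite Ef (negPf es_first_Cbar).
  move: jk; rewrite leq_eqVlt => /orP [/eqP Ej|] //.
  by move: Gf; rewrite Ef Ej (negPf es_last_Cbar).
left; have [j jk /andP [f1 f2]] := noncut_edge_block Cf cf.
have [i ik fi] := Cbar_vertex_block e1.
have ik1 : i <= k.+1 by lia.
have Eji := Bs_disj jk ik1 f1 fi.
by exists i => //; rewrite block_edgesE Cf cf -Eji f1 f2.
Qed.

Lemma entry_in i : 1 <= i <= k -> entry i \in Bs i.
Proof.
move=> ik; rewrite /entry; have Ei : i = i.-1.+1 by lia.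
by rewrite {1 3}Ei; apply: endin_right; lia.
Qed.

Lemma exit_in i : 1 <= i <= k -> exit i \in Bs i.
Proof. by move=> ik; apply: endin_left; lia. Qed.

Lemma incid_entry i v : 1 <= i <= k -> v \in Bs i -> incid C (es i.-1) v = (entry i == v).
Proof.
move=> ik; rewrite /entry; have Ei : i = i.-1.+1 by lia.
by rewrite {1 3}Ei => vi; apply: incid_es_right => //; lia.
Qed.

Lemma incid_exit i v : 1 <= i <= k -> v \in Bs i -> incid C (es i) v = (exit i == v).
Proof. by move=> ik vi; apply: incid_es_left => //; lia. Qed.

Lemma es_endsE m : m <= k ->
  mends C (es m) = (exit m, entry m.+1) \/ mends C (es m) = (entry m.+1, exit m).
Proof.
move=> mk; rewrite /exit /entry /= /endin.
have m0 : m <= k.+1 by lia. have m1 : m.+1 <= k.+1 by lia.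
case: (es_ends mk) => -[e1 e2].
  by left; rewrite e1 (Bs_notin m0 m1 _ e1) //; [case: (mends C (es m))|lia].
by right; rewrite (Bs_notin m1 m0 _ e2) ?e2 //; [case: (mends C (es m))|lia].
Qed.

Lemma Cbar_wf : wf_graph Cbar.
Proof.
apply/forallP => -[f|]; apply/implyP => Gf /=.
  by move: Gf; rewrite Cbar_SomeE => /and3P [_ -> ->].
have k1 : 1 <= 1 <= k by lia. have kk : 1 <= k <= k by lia.
by rewrite (Bs_Cbar k1 (entry_in k1)) (Bs_Cbar kk (exit_in kk)).
Qed.

(* At a vertex v of B_i, only the edges of B_i and the cut edges e_(i-1),
   e_i are incident; so a weighted incidence sum at v splits accordingly. *)
Lemma sum_incid_block i v (g : E -> nat) : 1 <= i <= k -> v \in Bs i ->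
  (forall f, f \notin mE C -> g f = 0) ->
  \sum_f g f * incid C f v =
  \sum_f (f \in block_edges i) * g f * incid C f v + g (es i.-1) * (entry i == v)
     + g (es i) * (exit i == v).
Proof.
move=> ik vi g0; have ik' : i <= k by lia. have ik1 : i.-1 <= k by lia.
have ik2 : i <= k.+1 by lia.
have es_neq : es i != es i.-1 by apply/eqP => Ee; have := es_inj ik' ik1 Ee; lia.
rewrite (bigD1 (es i.-1)) //= (bigD1 (es i)) //=.
rewrite [in RHS](bigD1 (es i.-1)) //= [in RHS](bigD1 (es i)) //=.
rewrite !es_notin_block // !mul0n !add0n (incid_entry ik vi) (incid_exit ik vi).
suff -> : \sum_(f | (f != es i.-1) && (f != es i)) g f * incid C f v =
          \sum_(f | (f != es i.-1) && (f != es i))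
            (f \in block_edges i) * g f * incid C f v by lia.
apply: eq_bigr => f /andP [f1 f2].
case fi: (f \in block_edges i); first by rewrite mul1n.
rewrite mul0n; case: (boolP (f \in mE C)) => Cf; last by rewrite g0.
case: (boolP (f \in cuts)) => cf.
  have [j jk Ef] := cutsP cf.
  rewrite Ef (incid_es_far (i:=i) jk ik2) ?muln0 //.
    by apply/eqP => Eij; move: f2; rewrite Ef Eij eqxx.
  by apply/eqP => Eij; move: f1; rewrite Ef Eij /= eqxx.
have [j jk /andP [e1 e2]] := noncut_edge_block Cf cf.
case: (altP (j =P i)) => ji; first by move: fi; rewrite block_edgesE Cf cf -ji e1 e2.
by rewrite /incid (Bs_neq jk ik2 ji e1 vi) (Bs_neq jk ik2 ji e2 vi) muln0.
Qed.

(* An edge set of bar C is consistent when it contains e_j (0 < j < k)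
   exactly when it contains e_C; its restriction to bar B_i keeps the
   edges of bar B_i, with e_C standing for bar e_i. *)
Definition consistent (F : {set option E}) :=
  forall j, 0 < j < k -> (Some (es j) \in F) = (None \in F).
Definition restrict i (F : {set option E}) := F :&: mE (Bbar i).

Lemma deg_Cbar (F : {set option E}) v : deg (span_sub Cbar F) v =
  (None \in F) * ((entry 1 == v) + (exit k == v)) + \sum_f (Some f \in F) * incid C f v.
Proof. by rewrite deg_spanE sum_option. Qed.

Lemma deg_Bbar i (F : {set option E}) v : deg (span_sub (Bbar i) F) v =
  (None \in F) * ((entry i == v) + (exit i == v)) + \sum_f (Some f \in F) * incid C f v.
Proof. by rewrite deg_spanE sum_option. Qed.

(* For a consistent F, degrees in bar C agree with degrees of the
   restrictions in the blocks: e_C, e_(i-1), e_i all play the role of bar e_i. *)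
Lemma deg_restrict (F : {set option E}) i v :
  F \subset mE Cbar -> consistent F -> 1 <= i <= k -> v \in Bs i ->
  deg (span_sub Cbar F) v = deg (span_sub (Bbar i) (restrict i F)) v.
Proof.
move=> sFG consF ik vi; rewrite deg_Cbar deg_Bbar.
have F_C f : Some f \in F -> f \in mE C.
  by move/(subsetP sFG); rewrite Cbar_SomeE => /and3P [].
rewrite (sum_incid_block (g := fun f => nat_of_bool (Some f \in F)) ik vi); last first.
  by move=> f nCf; case: (boolP (Some f \in F)) => // /F_C; rewrite (negPf nCf).
rewrite /restrict in_setI Bbar_None andbT.
have -> : \sum_f (f \in block_edges i) * (Some f \in F) * incid C f v =
          \sum_f (Some f \in F :&: mE (Bbar i)) * incid C f v.
  apply: eq_bigr => f _; rewrite in_setI Bbar_SomeE.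
  by case: (_ \in block_edges i); case: (_ \in F).
have Eentry : (None \in F) * (entry 1 == v) + (Some (es i.-1) \in F) * (entry i == v)
          = (None \in F) * (entry i == v).
  case: (altP (i =P 1)) => [->|i1] /=.
    case: (boolP (Some (es 0) \in F)) => [/(subsetP sFG)|_]; last by rewrite addn0.
    by rewrite (negPf es_first_Cbar).
  have k1 : 1 <= 1 <= k by lia. have ik2 : i <= k.+1 by lia.
  rewrite (Bs_neq (_ : 1 <= k.+1) ik2 _ (entry_in k1) vi); try lia.
  by rewrite consF ?muln0 ?add0n //; lia.
have Eexit : (None \in F) * (exit k == v) + (Some (es i) \in F) * (exit i == v)
          = (None \in F) * (exit i == v).
  case: (altP (i =P k)) => [->|ik'] /=.
    case: (boolP (Some (es k) \in F)) => [/(subsetP sFG)|_]; last by rewrite addn0.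
    by rewrite (negPf es_last_Cbar).
  have kk : 1 <= k <= k by lia. have ik2 : i <= k.+1 by lia.
  rewrite (Bs_neq (_ : k <= k.+1) ik2 _ (exit_in kk) vi); try lia.
  by rewrite consF ?muln0 ?add0n //; lia.
by rewrite !mulnDr -Eentry -Eexit; lia.
Qed.

(* Parity across the cut {e_j}: the vertex set of B_1 u ... u B_j. *)
Definition prefix j := [set w | [exists m : 'I_j.+1, (0 < m) && (w \in Bs m)]].

Lemma prefixE j i v : j < k -> 1 <= i <= k -> v \in Bs i -> (v \in prefix j) = (i <= j).
Proof.
move=> jk ik vi; rewrite inE; apply/existsP/idP => [[m /andP [m0 vm]]|ij].
  have mk : m <= k.+1 by have := ltn_ord m; lia.
  have ik' : i <= k.+1 by lia.
  by rewrite (Bs_disj ik' mk vi vm); have := ltn_ord m; lia.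
have ij1 : i < j.+1 by lia.
by exists (Ordinal ij1); rewrite /= vi andbT; lia.
Qed.

Lemma prefix_crossing j f : 0 < j < k -> Some f \in mE Cbar ->
  (((mends C f).1 \in prefix j) (+) ((mends C f).2 \in prefix j)) = (f == es j).
Proof.
move=> jk Gf; have jk' : j < k by lia.
case: (Cbar_edge_class Gf) => [[i ik fi]|[m mk ->]].
  have := fi; rewrite block_edgesE => /and4P [_ _ e1 e2].
  rewrite (prefixE jk' ik e1) (prefixE jk' ik e2) addbb.
  by case: eqP => // Ef; move: fi; rewrite Ef es_notin_block //; lia.
have mk' : m <= k by lia.
have m1 : 1 <= m <= k by lia. have m2 : 1 <= m.+1 <= k by lia.
have -> : (es m == es j) = (m == j).
  by apply/eqP/eqP => [|->] //; apply: es_inj; lia.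
by case: (es_ends mk') => -[e1 e2]; rewrite (prefixE jk' m1 e1) (prefixE jk' m2 e2);
  case: (ltngtP m j) => mj; lia.
Qed.

Lemma even_consistent F : even_cover Cbar F -> consistent F.
Proof.
move=> evF j jk; have [sFG _] := even_coverP evF.
have jk' : j < k by lia.
have even_prefix v : v \in prefix j -> ~~ odd (deg (span_sub Cbar F) v).
  rewrite inE => /existsP [m /andP [m0 vm]].
  apply: (even_cover_deg evF); apply: (Bs_Cbar (i := m)) => //; have := ltn_ord m; lia.
have := cut_parity even_prefix; rewrite card_sepE sum_option /=.
have k1 : 1 <= 1 <= k by lia. have kk : 1 <= k <= k by lia.
rewrite (prefixE jk' k1 (entry_in k1)) (prefixE jk' kk (exit_in kk)).
have -> : \sum_f (Some f \in F) * (((mends C f).1 \in prefix j) (+) ((mends C f).2 \in prefix j))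
   = \sum_f (Some f \in F) * (f == es j).
  apply: eq_bigr => f _; case Ff: (Some f \in F) => //=.
  by rewrite prefix_crossing // (subsetP sFG _ Ff).
rewrite (bigD1 (es j)) //= eqxx big1 ?addn0; last by move=> f /negPf ->; rewrite muln0.
have -> : (1 <= j) = true by lia.
have -> : (k <= j) = false by lia.
by case: (None \in F); case: (Some (es j) \in F).
Qed.

Lemma restrict_even i F : 1 <= i <= k -> even_cover Cbar F -> even_cover (Bbar i) (restrict i F).
Proof.
move=> ik evF; have [sFG degF] := even_coverP evF; apply: even_coverI; first exact: subsetIr.
move=> v vi; rewrite -(deg_restrict sFG (even_consistent evF) ik vi).
exact/degF/(Bs_Cbar ik vi).
Qed.

Definition Cinner (F : {set option E}) :=
  span_sub Cbar [set o in F | if o is Some f then f \notin cuts else false].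

Lemma Cinner_edge (F : {set option E}) f : Some f \in F -> f \notin cuts ->
  adj (Cinner F) (mends C f).1 (mends C f).2.
Proof.
move=> Ff ncf; apply/adjP; exists (Some f); first by rewrite inE Ff.
by left; apply: surjective_pairing.
Qed.

Lemma Cinner_adj_span (F : {set option E}) : subrel (adj (Cinner F)) (adj (span_sub Cbar F)).
Proof.
move=> a b /adjP [o Fo ends]; apply/adjP; exists o => //.
by move: Fo; rewrite inE => /andP [].
Qed.

Lemma Cinner_adj_block (F : {set option E}) i a b :
  F \subset mE Cbar -> 1 <= i <= k -> a \in Bs i -> adj (Cinner F) a b ->
  b \in Bs i /\ adj (span_sub (Bbar i) (restrict i F)) a b.
Proof.
move=> sFG ik ai /adjP [[f|] Fo ends]; last by move: Fo; rewrite inE andbF.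
move: Fo; rewrite inE => /andP [Ff ncf].
have ends' : mends C f = (a, b) \/ mends C f = (b, a) := ends.
have ik' : i <= k.+1 by lia.
case: (Cbar_edge_class (subsetP sFG _ Ff)) => [[i' ik1 fi]|[m mk Ef]]; last first.
  by move: ncf; rewrite Ef es_cut //; lia.
have := fi; rewrite block_edgesE => /and4P [_ _ e1 e2].
have ik1' : i' <= k.+1 by lia.
have Ei : i' = i by case: ends' => E1; rewrite E1 /= in e1 e2;
  [exact: Bs_disj ik1' ik' e1 ai | exact: Bs_disj ik1' ik' e2 ai].
subst i'; split; first by case: ends' => E1; rewrite E1 /= in e1 e2.
by apply/adjP; exists (Some f) => //; rewrite /restrict in_setI Ff Bbar_SomeE.
Qed.

Lemma Bbar_adj_cases (F : {set option E}) i a b :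
  adj (span_sub (Bbar i) (restrict i F)) a b ->
  adj (Cinner F) a b \/
  (None \in F /\ ((a = entry i /\ b = exit i) \/ (a = exit i /\ b = entry i))).
Proof.
move=> /adjP [[f|] Fo ends].
  left; move: Fo; rewrite /restrict in_setI Bbar_SomeE => /andP [Ff fi].
  apply/adjP; exists (Some f) => //.
  by rewrite inE Ff /=; move: fi; rewrite block_edgesE => /and4P [].
right; move: Fo; rewrite /restrict in_setI => /andP [FN _]; split => //.
have ends' : (entry i, exit i) = (a, b) \/ (entry i, exit i) = (b, a) := ends.
by case: ends' => -[-> ->]; [left|right].
Qed.

Lemma Cbar_adj_cases (F : {set option E}) a b :
  F \subset mE Cbar -> adj (span_sub Cbar F) a b ->
  adj (Cinner F) a b \/
  (None \in F /\ ((a = entry 1 /\ b = exit k) \/ (a = exit k /\ b = entry 1))) \/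
  (exists2 j, 0 < j < k & Some (es j) \in F /\
     ((a = exit j /\ b = entry j.+1) \/ (a = entry j.+1 /\ b = exit j))).
Proof.
move=> sFG /adjP [[f|] Fo ends]; last first.
  right; left; split => //.
  have ends' : (entry 1, exit k) = (a, b) \/ (entry 1, exit k) = (b, a) := ends.
  by case: ends' => -[-> ->]; [left|right].
case: (boolP (f \in cuts)) => cf; last first.
  by left; apply/adjP; exists (Some f) => //; rewrite inE Fo.
right; right; have [m mk Ef] := cutsP cf.
have Gf := subsetP sFG _ Fo; rewrite Ef in Gf Fo.
have m0 : 0 < m < k.
  have m0 : m != 0 by apply/eqP => Em; move: Gf; rewrite Em (negPf es_first_Cbar).
  have mk' : m != k by apply/eqP => Em; move: Gf; rewrite Em (negPf es_last_Cbar).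
  lia.
exists m => //; split => //.
have ends' : mends C f = (a, b) \/ mends C f = (b, a) := ends.
rewrite Ef in ends'.
by case: (es_endsE mk) => E1; rewrite E1 in ends'; case: ends' => -[-> ->];
  by [left|right|right|left].
Qed.

Lemma adj_es (F : {set option E}) j : j <= k -> Some (es j) \in F ->
  adj (span_sub Cbar F) (exit j) (entry j.+1).
Proof.
move=> jk Fj; apply/adjP; exists (Some (es j)) => //.
by case: (es_endsE jk) => E1; [left|right].
Qed.

Lemma Cinner_connect_block (F : {set option E}) i v w :
  F \subset mE Cbar -> 1 <= i <= k -> v \in Bs i ->
  connect (adj (Cinner F)) v w -> w \in Bs i.
Proof.
move=> sFG ik vi; apply: (connect_invariant (S := fun u => u \in Bs i)) => //.
by move=> a b ai ab; case: (Cinner_adj_block sFG ik ai ab).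
Qed.

(* If F contains e_C, the inner edges of F connect x_i to y_i: otherwise the
   component of x_i in the block would be left by the single edge bar e_i. *)
Lemma entry_exit_connect (F : {set option E}) i :
  F \subset mE Cbar -> 1 <= i <= k -> None \in F ->
  even_cover (Bbar i) (restrict i F) -> connect (adj (Cinner F)) (entry i) (exit i).
Proof.
move=> sFG ik FN evF.
set S := [set w in Bs i | connect (adj (Cinner F)) (entry i) w].
have evenS w : w \in S -> ~~ odd (deg (span_sub (Bbar i) (restrict i F)) w).
  by rewrite inE => /andP [wi _]; apply: (even_cover_deg evF).
have := cut_parity evenS; rewrite card_sepE sum_option /=.
have -> : (endin C (Bs i) (es i.-1) \in S) = true.
  by rewrite inE connect0 andbT; apply: (entry_in ik).
have -> : \sum_f (Some f \in restrict i F) *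
     (((mends C f).1 \in S) (+) ((mends C f).2 \in S)) = 0.
  apply: big1 => f _; case Ff: (Some f \in restrict i F) => //=.
  move: Ff; rewrite /restrict in_setI Bbar_SomeE => /andP [Ff fi].
  have := fi; rewrite block_edgesE => /and4P [_ ncf e1 e2].
  have E1 := Cinner_edge Ff ncf.
  rewrite !inE e1 e2 /=.
  case: (boolP (connect _ (entry i) (mends C f).1)) => C1.
    by rewrite (connect_trans C1 (connect1 E1)).
  case: (boolP (connect _ (entry i) (mends C f).2)) => C2 //.
  by move: C1; rewrite (connect_trans C2) //; apply: connect1; rewrite adj_sym.
rewrite /restrict in_setI FN Bbar_None /= addn0.
by rewrite inE (exit_in ik) /=; case: connect.
Qed.

Lemma connect_restrict (F : {set option E}) i v w :
  even_cover Cbar F -> 1 <= i <= k -> v \in Bs i ->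
  connect (adj (span_sub (Bbar i) (restrict i F))) v w = connect (adj (Cinner F)) v w.
Proof.
move=> evF ik vi; have [sFG _] := even_coverP evF.
have evFi := restrict_even ik evF.
apply/idP/idP; apply: (connect_simulate (S := fun u => u \in Bs i)) => // a b ai ab.
  case: (Bbar_adj_cases ab) => [ab'|[FN ends]].
    by have [bi _] := Cinner_adj_block sFG ik ai ab'; split => //; apply: connect1.
  have exy := entry_exit_connect sFG ik FN evFi.
  case: ends => -[-> ->]; split; rewrite ?(entry_in ik) ?(exit_in ik) //.
  by rewrite (sym_connect_sym (@adj_sym _ _ _)).
by have [bi ab'] := Cinner_adj_block sFG ik ai ab; split => //; apply: connect1.
Qed.

Lemma comp_restrict (F : {set option E}) i v :
  even_cover Cbar F -> 1 <= i <= k -> v \in Bs i ->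
  comp (span_sub (Bbar i) (restrict i F)) v = comp (Cinner F) v.
Proof.
move=> evF ik vi; have [sFG _] := even_coverP evF.
apply/setP => w; rewrite !inE /= (connect_restrict w evF ik vi).
case: (boolP (connect _ v w)) => vw; rewrite ?andbF ?andbT //.
have wi := Cinner_connect_block sFG ik vi vw.
by rewrite wi -Cbar_vertexE (Bs_Cbar ik wi).
Qed.

Definition support (F : {set option E}) := [set v in mV Cbar | deg (span_sub Cbar F) v != 0].
Definition block_support (F : {set option E}) i :=
  [set v in Bs i | deg (span_sub (Bbar i) (restrict i F)) v != 0].
Definition block_cycles (F : {set option E}) i := comp (Cinner F) @: block_support F i.

Lemma supportE (F : {set option E}) v :
  (v \in support F) = (v \in mV Cbar) && (deg (span_sub Cbar F) v != 0).
Proof. by rewrite !inE. Qed.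

Lemma block_supportE (F : {set option E}) i v :
  (v \in block_support F i) = (v \in Bs i) && (deg (span_sub (Bbar i) (restrict i F)) v != 0).
Proof. by rewrite !inE. Qed.

Lemma ncycles_restrict (F : {set option E}) i : even_cover Cbar F -> 1 <= i <= k ->
  ncycles (Bbar i) (restrict i F) = #|block_cycles F i|.
Proof.
move=> evF ik; rewrite ncyclesE /block_cycles; apply: eq_card => K.
by apply/imsetP/imsetP => -[v vS ->]; exists v => //; move: vS;
  rewrite block_supportE => /andP [vi _];
  rewrite comp_restrict.
Qed.

Lemma support_restrict (F : {set option E}) i v : even_cover Cbar F -> 1 <= i <= k -> v \in Bs i ->
  (v \in support F) = (v \in block_support F i).
Proof.
move=> evF ik vi; have [sFG _] := even_coverP evF.
by rewrite supportE block_supportE (Bs_Cbar ik vi) vi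
  (deg_restrict sFG (even_consistent evF) ik vi).
Qed.

Lemma block_cycles_disj (F : {set option E}) i j K : F \subset mE Cbar ->
  1 <= i <= k -> 1 <= j <= k -> K \in block_cycles F i -> K \in block_cycles F j -> i = j.
Proof.
move=> sFG ik jk /imsetP [v vS ->] /imsetP [w wS Ew].
move: vS wS; rewrite !block_supportE => /andP [vi _] /andP [wj _].
have vv : v \in comp (Cinner F) v := @comp_self _ _ (Cinner F) v (Bs_Cbar ik vi).
rewrite Ew compE in vv.
have vj := Cinner_connect_block sFG jk wj (proj2 (andP vv)).
by apply: (Bs_disj (v := v)) => //; lia.
Qed.

Lemma sum_block_cycles (F : {set option E}) (A : nat -> {set {set V}}) :
  F \subset mE Cbar -> (forall i, A i \subset block_cycles F i) ->
  \sum_K [exists i : 'I_k, K \in A i.+1] = \sum_(i < k) #|A i.+1|.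
Proof.
move=> sFG sA.
rewrite (eq_bigr (fun K => \sum_(i < k) (K \in A i.+1))); last first.
  move=> K _; rewrite (sum_unique_index (P := fun i K => K \in A i)) // => i j ik jk Ki Kj.
  suff : i.+1 = j.+1 by case.
  by apply: (block_cycles_disj sFG _ _ (subsetP (sA _) _ Ki) (subsetP (sA _) _ Kj)); lia.
by rewrite exchange_big /=; apply: eq_bigr => i _; rewrite card_sumE.
Qed.

(* Without e_C, F has no cut edge, so its cycles are those of the blocks. *)
Lemma ncycles_without_eC (F : {set option E}) : even_cover Cbar F -> None \notin F ->
  ncycles Cbar F = \sum_(i < k) #|block_cycles F i.+1|.
Proof.
move=> evF FN; have [sFG _] := even_coverP evF; have consF := even_consistent evF.
have Ecomp v : comp (span_sub Cbar F) v = comp (Cinner F) v.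
  apply/setP => w; rewrite !inE /=; congr (_ && _); apply/idP/idP; last first.
    exact: connect_sub (@Cinner_adj_span F).
  apply: (connect_simulate (S := fun=> True)) => // a b _ ab; split => //.
  case: (Cbar_adj_cases sFG ab) => [ab'|[[FN' _]|[j jk [Fj _]]]]; first exact: connect1.
    by rewrite FN' in FN.
  by rewrite consF // in Fj; rewrite Fj in FN.
rewrite ncyclesE (eq_imset _ Ecomp) card_sumE.
rewrite -(@sum_block_cycles F (block_cycles F)) //; apply: eq_bigr => K _.
congr nat_of_bool; apply/imsetP/existsP => [[v vS ->]|[i /imsetP [v vS ->]]].
  have Gv : v \in mV Cbar by move: vS; rewrite supportE => /andP [].
  have [i ik vi] := Cbar_vertex_block Gv; have [j Ej] := ord_succ ik.
  by exists j; rewrite -Ej; apply/imsetP; exists v; rewrite // -(support_restrict evF ik vi).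
have ik := ord_succ_range i.
exists v => //; move: (vS); rewrite block_supportE => /andP [vi _].
by rewrite (support_restrict evF ik vi).
Qed.

(* With e_C, F has one cycle through e_C, running through every block from
   x_1 to y_1, then via e_1 to x_2, ..., to y_k and back along e_C; all other
   cycles of F are inner cycles of single blocks. *)
Definition eC_cycle (F : {set option E}) := comp (span_sub Cbar F) (entry 1).

Lemma connect_entries (F : {set option E}) i : even_cover Cbar F -> None \in F -> 1 <= i <= k ->
  connect (adj (span_sub Cbar F)) (entry 1) (entry i).
Proof.
move=> evF FN; have [sFG _] := even_coverP evF; have consF := even_consistent evF.
elim: i => [|i IH] ik; first by lia.
case: (posnP i) => [->|i0]; first exact: connect0.
have ik' : 1 <= i <= k by lia.
apply: connect_trans (IH ik') _; apply: (connect_trans (y := exit i)).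
  apply: connect_sub (@Cinner_adj_span F) _.
  exact: entry_exit_connect sFG ik' FN (restrict_even ik' evF).
by apply/connect1/adj_es; [lia | rewrite consF //; lia].
Qed.

(* A vertex is near an entry when it lies in a block B_i and is joined to
   x_i by inner edges; this property propagates along the edges of F. *)
Definition near_entry (F : {set option E}) u :=
  exists2 i, 1 <= i <= k & u \in Bs i /\ connect (adj (Cinner F)) (entry i) u.

Lemma near_entry_self i (F : {set option E}) : 1 <= i <= k -> near_entry F (entry i).
Proof. by move=> ik; exists i => //; split; [exact: entry_in|exact: connect0]. Qed.

Lemma near_entry_step (F : {set option E}) u v : even_cover Cbar F -> None \in F ->
  near_entry F u -> adj (span_sub Cbar F) u v -> near_entry F v.
Proof.
move=> evF FN [i ik [ui iu]] uv; have [sFG _] := even_coverP evF.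
have near_exit j : 1 <= j <= k -> near_entry F (exit j).
  move=> jk; exists j => //; split; first exact: exit_in.
  exact: entry_exit_connect sFG jk FN (restrict_even jk evF).
have k1 : 1 <= 1 <= k by lia. have kk : 1 <= k <= k by lia.
case: (Cbar_adj_cases sFG uv) => [uv'|[[_ [[_ ->]|[_ ->]]]|[j jk [_ [[_ ->]|[_ ->]]]]]].
- have [vi _] := Cinner_adj_block sFG ik ui uv'; exists i => //; split => //.
  exact: connect_trans iu (connect1 uv').
- exact: near_exit.
- exact: near_entry_self.
- by apply: near_entry_self; lia.
- by apply: near_exit; lia.
Qed.

Lemma eC_cycle_block (F : {set option E}) i w : even_cover Cbar F -> None \in F -> 1 <= i <= k ->
  w \in Bs i -> (w \in eC_cycle F) = connect (adj (Cinner F)) (entry i) w.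
Proof.
move=> evF FN ik wi; rewrite /eC_cycle compE; apply/idP/idP => [/andP [_ w1]|iw].
  have k1 : 1 <= 1 <= k by lia.
  have step u v : near_entry F u -> adj (span_sub Cbar F) u v -> near_entry F v.
    exact: near_entry_step evF FN.
  have [i' ik' [wi' iw]] := connect_invariant step (near_entry_self F k1) w1.
  by rewrite (@Bs_disj i i' w) //; lia.
rewrite (Bs_Cbar ik wi) /=; apply: connect_trans (connect_entries evF FN ik) _.
exact: connect_sub (@Cinner_adj_span F) _.
Qed.

Lemma entry_eC_cycle (F : {set option E}) i : even_cover Cbar F -> None \in F -> 1 <= i <= k ->
  entry i \in eC_cycle F.
Proof. by move=> evF FN ik; rewrite (eC_cycle_block evF FN ik (entry_in ik)) connect0. Qed.

Lemma exit_eC_cycle (F : {set option E}) i : even_cover Cbar F -> None \in F -> 1 <= i <= k ->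
  exit i \in eC_cycle F.
Proof.
move=> evF FN ik; have [sFG _] := even_coverP evF.
rewrite (eC_cycle_block evF FN ik (exit_in ik)).
exact: entry_exit_connect sFG ik FN (restrict_even ik evF).
Qed.

(* Off the cycle through e_C, every edge of F is an inner edge, since the
   ends of e_C and of the e_j all lie on that cycle. *)
Lemma comp_off_eC_cycle (F : {set option E}) v : even_cover Cbar F -> None \in F ->
  v \in mV Cbar -> v \notin eC_cycle F -> comp (span_sub Cbar F) v = comp (Cinner F) v.
Proof.
move=> evF FN Gv vZ; have [sFG _] := even_coverP evF.
apply/setP => w; rewrite !compE; congr (_ && _); apply/idP/idP; last first.
  exact: connect_sub (@Cinner_adj_span F).
apply: (connect_simulate (S := fun a => a \in mV Cbar /\ a \notin eC_cycle F)) => //.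
move=> a b [Ga aZ] ab.
have Gb : b \in mV Cbar := adj_vertex (wf_span Cbar_wf sFG) ab.
have bZ : b \notin eC_cycle F.
  apply: contra aZ; rewrite /eC_cycle !compE Ga Gb /= => Zb.
  by apply: connect_trans Zb (connect1 _); rewrite adj_sym.
have k1 : 1 <= 1 <= k by lia. have kk : 1 <= k <= k by lia.
case: (Cbar_adj_cases sFG ab) => [ab'|[[_ [[Ea _]|[Ea _]]]|[j jk [_ [[Ea _]|[Ea _]]]]]].
- by split => //; apply: connect1.
- by rewrite Ea (entry_eC_cycle evF FN k1) in aZ.
- by rewrite Ea (exit_eC_cycle evF FN kk) in aZ.
- by rewrite Ea (exit_eC_cycle evF FN (_ : 1 <= j <= k)) in aZ; lia.
- by rewrite Ea (entry_eC_cycle evF FN (_ : 1 <= j.+1 <= k)) in aZ; lia.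
Qed.

Definition block_cycles_off (F : {set option E}) i :=
  block_cycles F i :\ comp (Cinner F) (entry i).

Lemma block_cycles_off_cycle (F : {set option E}) i K : even_cover Cbar F -> None \in F ->
  1 <= i <= k -> K \in block_cycles_off F i ->
  K \in comp (span_sub Cbar F) @: support F /\ K != eC_cycle F.
Proof.
move=> evF FN ik; rewrite /block_cycles_off in_setD1 => /andP [Kx /imsetP [v vS EK]].
move: (vS); rewrite block_supportE => /andP [vi _].
have Gv := Bs_Cbar ik vi.
have vZ : v \notin eC_cycle F.
  rewrite (eC_cycle_block evF FN ik vi); apply: contra Kx => xv.
  have : v \in comp (Cinner F) (entry i) by rewrite compE Gv.
  by move/comp_eq; rewrite -EK => ->.
split.
  apply/imsetP; exists v; first by rewrite (support_restrict evF ik vi).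
  by rewrite EK (comp_off_eC_cycle evF FN Gv vZ).
apply: contra vZ => /eqP <-; rewrite EK.
exact: (@comp_self _ _ (Cinner F) v Gv).
Qed.

Lemma cycle_block_cycles_off (F : {set option E}) K : even_cover Cbar F -> None \in F ->
  K \in comp (span_sub Cbar F) @: support F -> K != eC_cycle F ->
  exists i : 'I_k, K \in block_cycles_off F i.+1.
Proof.
move=> evF FN /imsetP [v vS EK] KZ; have [sFG _] := even_coverP evF.
have Gv : v \in mV Cbar by move: vS; rewrite supportE => /andP [].
have vZ : v \notin eC_cycle F.
  by apply: contra KZ => vZ; rewrite EK; apply/eqP; exact: comp_eq vZ.
have [i ik vi] := Cbar_vertex_block Gv; have [j Ej] := ord_succ ik.
exists j; rewrite -Ej /block_cycles_off in_setD1 EK (comp_off_eC_cycle evF FN Gv vZ).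
apply/andP; split.
  apply: contra vZ => /eqP xv; rewrite (eC_cycle_block evF FN ik vi).
  by have := @comp_self _ _ (Cinner F) v Gv; rewrite xv compE => /andP [].
by apply/imsetP; exists v; rewrite // -(support_restrict evF ik vi).
Qed.

(* Each block contributes the inner component through x_i, and these k
   components together with e_C and the e_j form the one cycle through e_C. *)
Lemma ncycles_with_eC (F : {set option E}) : even_cover Cbar F -> None \in F ->
  ncycles Cbar F + k = \sum_(i < k) #|block_cycles F i.+1| + 1.
Proof.
move=> evF FN; have [sFG _] := even_coverP evF.
have k1 : 1 <= 1 <= k by lia.
have entry_cycle i : 1 <= i <= k -> comp (Cinner F) (entry i) \in block_cycles F i.
  move=> ik; apply/imsetP; exists (entry i) => //.
  by rewrite block_supportE (entry_in ik) deg_Bbar /restrict in_setI FN Bbar_None eqxx.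
have Zcycle : eC_cycle F \in comp (span_sub Cbar F) @: support F.
  apply/imsetP; exists (entry 1) => //.
  by rewrite supportE (Bs_Cbar k1 (entry_in k1)) deg_Cbar FN eqxx.
have split_cycle K : nat_of_bool (K \in comp (span_sub Cbar F) @: support F) =
    (K == eC_cycle F) + [exists i : 'I_k, K \in block_cycles_off F i.+1].
  case: (altP (K =P eC_cycle F)) => [->|KZ].
    rewrite Zcycle; case: existsP => // -[i Ki].
    by have [_] := block_cycles_off_cycle evF FN (ord_succ_range i) Ki; rewrite eqxx.
  rewrite add0n; congr nat_of_bool; apply/idP/existsP => [KG|[i Ki]].
    exact: cycle_block_cycles_off.
  by case: (block_cycles_off_cycle evF FN (ord_succ_range i) Ki).
rewrite ncyclesE card_sumE (eq_bigr _ (fun K _ => split_cycle K)) big_split /=.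
rewrite (@sum_block_cycles F (block_cycles_off F)) //; last by move=> i; apply: subsetDl.
rewrite (bigD1 (eC_cycle F)) //= eqxx big1 ?addn0; last by move=> K /negPf ->.
have -> : \sum_(i < k) #|block_cycles F i.+1| =
          \sum_(i < k) (#|block_cycles_off F i.+1| + 1).
  apply: eq_bigr => i _; rewrite (cardsD1 (comp (Cinner F) (entry i.+1))).
  by rewrite (entry_cycle _ (ord_succ_range i)) addnC.
by rewrite big_split /= sum1_card card_ord -addnA addnC.
Qed.

Lemma sum_Cbar_vertices (phi : V -> nat) :
  \sum_v (v \in mV Cbar) * phi v = \sum_(i < k) \sum_v (v \in Bs i.+1) * phi v.
Proof.
rewrite exchange_big /=; apply: eq_bigr => v _; rewrite -big_distrl /=.
congr (_ * _); rewrite (sum_unique_index (P := fun i v => v \in Bs i)).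
  congr nat_of_bool; apply/idP/existsP => [Gv|[i vi]].
    by have [i ik vi] := Cbar_vertex_block Gv; have [j Ej] := ord_succ ik; exists j; rewrite -Ej.
  exact: Bs_Cbar (ord_succ_range i) vi.
move=> i j ik jk vi vj; suff : i.+1 = j.+1 by case.
by apply: (Bs_disj (v := v)) => //; lia.
Qed.

Lemma nisolated_restrict (F : {set option E}) : even_cover Cbar F ->
  nisolated Cbar F = \sum_(i < k) nisolated (Bbar i.+1) (restrict i.+1 F).
Proof.
move=> evF; have [sFG _] := even_coverP evF.
rewrite /nisolated card_sepE sum_Cbar_vertices; apply: eq_bigr => i _.
rewrite card_sepE; apply: eq_bigr => v _; case vi: (v \in Bs i.+1) => //.
by rewrite (deg_restrict sFG (even_consistent evF) (ord_succ_range i) vi).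
Qed.

Lemma excF_restrict (F : {set option E}) : even_cover Cbar F ->
  excF Cbar F + 2 * k * (None \in F) =
  \sum_(i < k) excF (Bbar i.+1) (restrict i.+1 F) + 2 * (None \in F).
Proof.
move=> evF; rewrite /excF big_split /= -big_distrr /= nisolated_restrict //.
under eq_bigr => i _ do rewrite (ncycles_restrict evF (ord_succ_range i)).
case: (boolP (None \in F)) => FN; last by rewrite (ncycles_without_eC evF FN) !muln0 !addn0.
have := ncycles_with_eC evF FN.
by rewrite /= !muln1; lia.
Qed.

Lemma deg_Cbar_block i v : 1 <= i <= k -> v \in Bs i -> deg Cbar v = deg (Bbar i) v.
Proof.
move=> ik vi; have consG : consistent (mE Cbar) by move=> j jk; rewrite es_Cbar // Cbar_None.
have restrictG : restrict i (mE Cbar) = mE (Bbar i).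
  apply/setIidPr/subsetP => -[f|] fi; last exact: Cbar_None.
  by apply: (block_edge_Cbar ik); rewrite -Bbar_SomeE.
by have := deg_restrict (subxx _) consG ik vi; rewrite restrictG.
Qed.

Lemma deg_Bbar_C i v : 1 <= i <= k -> v \in Bs i -> deg (Bbar i) v = deg C v.
Proof.
move=> ik vi; rewrite (degE (Bbar i)) degE sum_option Bbar_None mul1n.
rewrite (sum_incid_block (g := fun f => nat_of_bool (f \in mE C)) ik vi); last first.
  by move=> f /negPf ->.
rewrite (es_edge (_ : i <= k)) ?(es_edge (_ : i.-1 <= k)) ?mul1n; try lia.
have -> : \sum_f (Some f \in mE (Bbar i)) * incid (Bbar i) (Some f) v =
          \sum_f (f \in block_edges i) * (f \in mE C) * incid C f v.
  apply: eq_bigr => f _; rewrite Bbar_SomeE; case fi: (f \in block_edges i) => //.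
  by move: fi; rewrite block_edgesE => /and4P [-> _ _ _].
by rewrite /incid /= -/(entry i) -/(exit i); lia.
Qed.

Lemma order_additive : n_ Cbar + n2_ Cbar = \sum_(i < k) (n_ (Bbar i.+1) + n2_ (Bbar i.+1)).
Proof.
rewrite big_split /=; congr (_ + _).
  rewrite /n_ card_sumE.
  under eq_bigr => v _ do rewrite -[nat_of_bool _]muln1.
  rewrite sum_Cbar_vertices; apply: eq_bigr => i _; rewrite card_sumE.
  by apply: eq_bigr => v _; rewrite muln1.
rewrite /n2_ card_sepE sum_Cbar_vertices; apply: eq_bigr => i _.
rewrite card_sepE; apply: eq_bigr => v _; case vi: (v \in Bs i.+1) => //.
by rewrite (deg_Cbar_block (ord_succ_range i) vi).
Qed.

Lemma walk_parity_set i z p : 1 <= i <= k -> z \in Bs i -> path (adj Cblocks) z p ->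
  exists2 W : {set option E}, W \subset [set Some f | f in block_edges i] &
    forall v, odd (deg (span_sub (Bbar i) W) v) = (v == z) (+) (v == last z p).
Proof.
move=> ik; have ik' : i <= k.+1 by lia.
elim: p z => [|c p IH] z zi /=.
  move=> _; exists set0; first exact: sub0set.
  by move=> v; rewrite addbb deg_spanE big1 // => o _; rewrite inE mul0n.
case/andP => zc cp.
have ci : c \in Bs i := Bs_closed ik' zi (connect1 zc).
have [W sW oddW] := IH c ci cp.
have /adjP [f Cf ends] := zc.
have ends' : mends C f = (z, c) \/ mends C f = (c, z) := ends.
have fi : f \in block_edges i.
  move: Cf; rewrite /Cblocks /= inE => /andP [ncf Cf].
  by rewrite block_edgesE Cf ncf; case: ends' => ->; rewrite /= ?zi ?ci.
exists (if Some f \in W then W :\ Some f else Some f |: W).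
  case: ifP => _; first exact: subset_trans (subD1set W (Some f)) sW.
  apply/subsetP => o; rewrite in_setU1 => /orP [/eqP ->|/(subsetP sW) //].
  by apply/imsetP; exists f.
move=> v; rewrite odd_deg_toggle oddW.
have -> : incid (Bbar i) (Some f) v = (z == v) + (c == v).
  by rewrite /incid /=; case: ends' => ->; rewrite //= addnC.
rewrite oddD !(eq_sym v).
by case: (z == v); case: (c == v); case: (last c p == v).
Qed.

(* Closing a walk from x_i to y_i by bar e_i gives an even subgraph; since
   degrees are at most 3, all degrees are then 0 or 2. *)
Lemma even_cover_through i : 1 <= i <= k -> exists F, even_cover (Bbar i) F && (None \in F).
Proof.
move=> ik; have xi := entry_in ik; have yi := exit_in ik.
have ik' : i <= k.+1 by lia.
have : connect (adj Cblocks) (entry i) (exit i).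
  by move: yi; rewrite (Bs_comp ik' xi) compE => /andP [].
case/connectP => p xp Ey.
have [W sW oddW] := walk_parity_set ik xi xp.
have WN : None \notin W by apply/negP => /(subsetP sW) /imsetP [f _].
have sW' : None |: W \subset mE (Bbar i).
  apply/subsetP => o; rewrite in_setU1 => /orP [/eqP ->|/(subsetP sW) /imsetP [f fi ->]].
    exact: Bbar_None.
  by rewrite Bbar_SomeE.
exists (None |: W); rewrite setU11 andbT; apply: even_coverI => // v vi.
have even_v : ~~ odd (deg (span_sub (Bbar i) (None |: W)) v).
  rewrite deg_spanE_in big_setU1 // -deg_spanE_in oddD oddW -Ey.
  rewrite /incid /= -/(entry i) -/(exit i) oddD !(eq_sym v).
  by case: (entry i == v); case: (exit i == v).
have le3 : deg (span_sub (Bbar i) (None |: W)) v <= 3.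
  apply: leq_trans (deg_span_mono _ _ sW') _.
  change (deg (Bbar i) v <= 3); rewrite (deg_Bbar_C ik vi).
  have /forallP /(_ v) := C_subcubic.
  by rewrite (subsetP (Bs_sub ik') _ vi).
by move: even_v le3; case: (deg _ v) => [|[|[|[|d]]]].
Qed.

Lemma even_cover_avoiding i : exists F, even_cover (Bbar i) F && (None \notin F).
Proof.
exists set0; rewrite inE andbT; apply: even_coverI; first exact: sub0set.
by move=> v _; rewrite deg_spanE big1 // => o _; rewrite inE mul0n.
Qed.

Definition glue (b : bool) (Fs : nat -> {set option E}) : {set option E} :=
  [set o | if o is Some f then
       (b && [exists j : 'I_k, (0 < j) && (f == es j)]) ||
       [exists i : 'I_k, (f \in block_edges i.+1) && (Some f \in Fs i.+1)]
     else b].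

Lemma glue_SomeE b Fs f : (Some f \in glue b Fs) =
  (b && [exists j : 'I_k, (0 < j) && (f == es j)]) ||
  [exists i : 'I_k, (f \in block_edges i.+1) && (Some f \in Fs i.+1)].
Proof. by rewrite inE. Qed.

Lemma glue_None b Fs : (None \in glue b Fs) = b.
Proof. by rewrite inE. Qed.

Section Glue.
Variables (b : bool) (Fs : nat -> {set option E}).
Hypothesis Fs_even : forall i, 1 <= i <= k -> even_cover (Bbar i) (Fs i).
Hypothesis Fs_None : forall i, 1 <= i <= k -> (None \in Fs i) = b.

Lemma glue_restrict i : 1 <= i <= k -> restrict i (glue b Fs) = Fs i.
Proof.
move=> ik; have [sFi _] := even_coverP (Fs_even ik).
apply/setP => -[f|]; rewrite /restrict in_setI; last first.
  by rewrite glue_None Bbar_None (Fs_None ik) andbT.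
rewrite Bbar_SomeE glue_SomeE; case fi: (f \in block_edges i); last first.
  rewrite andbF; apply/esym/negbTE; apply: contraFN fi => Fif.
  by rewrite -Bbar_SomeE (subsetP sFi _ Fif).
have -> : [exists j : 'I_k, (0 < j) && (f == es j)] = false.
  apply/negbTE/existsP => -[j /andP [_ /eqP Ef]]; move: fi.
  by rewrite Ef es_notin_block //; have := ltn_ord j; lia.
rewrite andbF andbT /=; apply/existsP/idP => [[j /andP [fj Fjf]]|Fif].
  by rewrite (block_edges_disj ik (ord_succ_range j) fi fj).
by have [j Ej] := ord_succ ik; exists j; rewrite -Ej fi Fif.
Qed.

Lemma glue_sub : glue b Fs \subset mE Cbar.
Proof.
apply/subsetP => -[f|] Gf; last exact: Cbar_None.
move: Gf; rewrite glue_SomeE => /orP [/andP [_ /existsP [j /andP [j0 /eqP ->]]]|].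
  by apply: es_Cbar; have := ltn_ord j; lia.
by case/existsP => i /andP [fi _]; exact: block_edge_Cbar (ord_succ_range i) fi.
Qed.

Lemma glue_consistent : consistent (glue b Fs).
Proof.
move=> j jk; rewrite glue_SomeE glue_None.
have -> : [exists i : 'I_k, (es j \in block_edges i.+1) && (Some (es j) \in Fs i.+1)] = false.
  by apply/negbTE/existsP => -[i /andP [ji _]]; rewrite es_notin_block in ji; lia.
rewrite orbF; case: b => //=; apply/existsP.
have jk' : j < k by lia.
by exists (Ordinal jk') => /=; rewrite eqxx andbT; lia.
Qed.

Lemma glue_even : even_cover Cbar (glue b Fs).
Proof.
apply: even_coverI glue_sub _ => v Gv.
have [i ik vi] := Cbar_vertex_block Gv.
rewrite (deg_restrict glue_sub glue_consistent ik vi) (glue_restrict ik).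
by have [_] := even_coverP (Fs_even ik); apply.
Qed.

End Glue.

(* Hence the minimal excesses with (b = true) and without (b = false) e_C
   are additive up to the correction 2k - 2 for the cycle through e_C. *)
Lemma excmin_additive b :
  excmin Cbar (has_new_edge b) + 2 * k * b =
  \sum_(i < k) excmin (Bbar i.+1) (has_new_edge b) + 2 * b.
Proof.
have exists_cover i : 1 <= i <= k -> exists F, even_cover (Bbar i) F && has_new_edge b F.
  move=> ik; case: b.
    by have [F /andP [evF FN]] := even_cover_through ik; exists F; rewrite evF /has_new_edge FN.
  have [F /andP [evF FN]] := even_cover_avoiding i.
  by exists F; rewrite evF /has_new_edge (negPf FN).
pose Fs i := odflt set0 [pick F | even_cover (Bbar i) F && has_new_edge b F &&
                                  (excF (Bbar i) F == excmin (Bbar i) (has_new_edge b))].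
have Fs_opt i : 1 <= i <= k -> [/\ even_cover (Bbar i) (Fs i), has_new_edge b (Fs i) &
              excF (Bbar i) (Fs i) = excmin (Bbar i) (has_new_edge b)].
  move=> ik; rewrite /Fs; case: pickP => [F /andP [/andP [evF bF] /eqP ->]|none] //=.
  have [F0 /andP [evF0 bF0]] := exists_cover i ik.
  have [F /andP [evF bF] EF] := excmin_ex evF0 bF0.
  by have := none F; rewrite evF bF EF eqxx.
have Fs_even i (ik : 1 <= i <= k) := let: And3 evF _ _ := Fs_opt i ik in evF.
have Fs_None i (ik : 1 <= i <= k) := let: And3 _ bF _ := Fs_opt i ik in eqP bF.
have bglue : has_new_edge b (glue b Fs) by rewrite /has_new_edge glue_None.
have [F /andP [evF bF] EF] := excmin_ex (glue_even Fs_even Fs_None) bglue.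
have FN : (None \in F) = b by apply/eqP.
apply/eqP; rewrite eqn_leq; apply/andP; split.
  apply: (@leq_trans (excF Cbar (glue b Fs) + 2 * k * b)).
    by rewrite leq_add2r; apply: excmin_le (glue_even Fs_even Fs_None) bglue.
  have := excF_restrict (glue_even Fs_even Fs_None); rewrite glue_None => ->.
  rewrite leq_add2r.
  apply: leq_sum => i _; have ik := ord_succ_range i.
  by rewrite (glue_restrict Fs_even Fs_None ik); have [_ _ ->] := Fs_opt _ ik.
rewrite EF; have := excF_restrict evF; rewrite FN => ->; rewrite leq_add2r.
apply: leq_sum => i _; apply: excmin_le; first exact: restrict_even (ord_succ_range i) evF.
by rewrite /has_new_edge /restrict in_setI Bbar_None andbT FN.
Qed.

Lemma closure_sum :
  closure_dsum C k x y es Bs = (\sum_(i < k) block_dsum C k es Bs i.+1)%R.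
Proof.
rewrite /closure_dsum /block_dsum (negPf (lt0n_neq0 k_gt0)) dsumE.
under eq_bigr => i _ do rewrite dsumE.
have with_eC := excmin_additive true; have without_eC := excmin_additive false.
rewrite /= muln1 muln0 !addn0 in with_eC without_eC.
have with_eC' : ((excmin Cbar (has_new_edge true))%:R + 2 * k%:R =
  \sum_(i < k) (excmin (Bbar i.+1) (has_new_edge true))%:R + 2 :> rat)%R.
  by rewrite -natr_sum -(natrM _ 2) -!natrD with_eC.
have without_eC' : ((excmin Cbar (has_new_edge false))%:R =
  \sum_(i < k) (excmin (Bbar i.+1) (has_new_edge false))%:R :> rat)%R.
  by rewrite -natr_sum without_eC.
have order' : ((n_ Cbar + n2_ Cbar)%:R =
  \sum_(i < k) (n_ (Bbar i.+1) + n2_ (Bbar i.+1))%:R :> rat)%R.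
  by rewrite -natr_sum order_additive.
rewrite !big_split /= !sumrN -mulr_sumr -mulr_suml sumr_const card_ord.
rewrite -without_eC' -order' -mulr_natr.
by move: with_eC'; lra.
Qed.

End Chain.

Unset Implicit Arguments.
Local Open Scope ring_scope.

Theorem proposition2p3 (V E : finType) (C : mgraph V E) (k : nat) (x y : V)
    (es : nat -> E) (Bs : nat -> {set V}) :
  subcubic_chain C k x y es Bs ->
  (forall i : nat, (1 <= i <= k)%N -> block_dsum C k es Bs i <= 0) ->
  closure_dsum C k x y es Bs <= 0 /\
  (closure_dsum C k x y es Bs = 0 <->
   (forall i : nat, (1 <= i <= k)%N -> block_dsum C k es Bs i = 0)).
Proof.
move=> chainC blocks_le0.
case: (posnP k) => [k0|k_gt0].
  by rewrite /closure_dsum k0; split => //; split => // _ i; lia.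
by rewrite (closure_sum chainC k_gt0); exact: sum_nonpos.
Qed.
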